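(* Let $t_0<\beta\le+\infty$, $J=[t_0,\beta[$, let $D\subset\mathbb{R}^n$ be an open set, let $m\ge1$, and let $f\colon J\times D^m\to\mathbb{R}^n$ be continuous. Suppose there is a continuous function $k\colon J\to\mathbb{R}$ such that \[ \|F(t,z)-F(t,z')\|\le k(t)\,\|z-z'\|\qquad(t\in J,\ z,z'\in D^m), \] where $F(t,(z_1,\dots,z_m))=f(t,z_1,\dots,z_m)$. Let $g_1,\dots,g_m\colon J\to\mathbb{R}$ be continuous functions such that, for some real $\gamma\le t_0$, $\gamma\le g_j(t)\le t$ for all $t\in J$, $j=1,\dots,m$. Let $\theta,\widetilde\theta\colon[\gamma,t_0]\to D$ be continuous initial functions. Suppose $x,\widetilde x\colon[\gamma,\beta[\to D$ are solutions of the problems \[ x'(t)=f\big(t,x(g_1(t)),\dots,x(g_m(t))\big)\ (t\in J),\quad x(t)=\theta(t)\ (t\in[\gamma,t_0]), \] \[ \widetilde x'(t)=f\big(t,\widetilde x(g_1(t)),\dots,\widetilde x(g_m(t))\big)\ (t\in J),\quad \widetilde x(t)=\widetilde\theta(t)\ (t\in[\gamma,t_0]), \] respectively. Then for all $t\in[t_0,\beta[$, \[ \|x(t)-\widetilde x(t)\|\le\|\theta-\widetilde\theta\|\exp\Big(\int_{t_0}^t k(s)\,ds\Big), \] where $\|\theta-\widetilde\theta\|=\sup_{\gamma\le s\le t_0}\|\theta(s)-\widetilde\theta(s)\|$.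
   Context: A solution on $[\gamma,\beta[$ is a continuous function $[\gamma,\beta[\to D$, differentiable on $[t_0,\beta[$ (one-sided at $t_0$), satisfying the differential equation for all $t\in[t_0,\beta[$ and equal to the given initial function on $[\gamma,t_0]$. The norm $\|\cdot\|$ on $\mathbb{R}^n$ is a fixed norm, and on $D^m\subset(\mathbb{R}^n)^m$ the norm is $\|(z_1,\dots,z_m)\|=\max_{1\le j\le m}\|z_j\|$. *)

From HB Require Import structures.
From mathcomp Require Import all_boot all_order all_algebra.
From mathcomp Require Import all_classical all_reals all_analysis.
Set Implicit Arguments. Unset Strict Implicit. Unset Printing Implicit Defensive.
Import Order.TTheory GRing.Theory Num.Theory.
Import numFieldNormedType.Exports.
Local Open Scope classical_set_scope.
Local Open Scope ring_scope.

Definition is_norm (R : realType) (n : nat) (N : 'rV[R]_n -> R) : Prop :=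
  [/\ forall v, N v = 0 -> v = 0,
      forall (a : R) v, N (a *: v) = `|a| * N v
    & forall u v, N (u + v) <= N u + N v].

(* The norm on (R^n)^m, points represented as m x n matrices whose rows are
   z_1, ..., z_m :  ||(z_1,...,z_m)|| = max_j ||z_j||. *)
Definition normm (R : realType) (m n : nat) (N : 'rV[R]_n -> R)
  (z : 'M[R]_(m, n)) : R :=
  \big[Order.max/0]_(j < m) N (row j z).

Definition powset (R : realType) (m n : nat) (D : set 'rV[R]_n)
  : set 'M[R]_(m, n) := [set z | forall j : 'I_m, D (row j z)].

Definition Jint (R : realType) (t0 : R) (beta : \bar R) : set R :=
  [set t | t0 <= t /\ (t%:E < beta)%E].

Definition right_deriv (R : realType) (V : normedModType R) (x : R -> V)
  (t : R) (v : V) : Prop :=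
  (fun h : R => h^-1 *: (x (h + t) - x t)) @ 0^'+ --> v.

Definition is_solution (R : realType) (m n : nat) (D : set 'rV[R]_n)
  (f : R -> 'M[R]_(m, n) -> 'rV[R]_n) (g : 'I_m -> R -> R)
  (gamma t0 : R) (beta : \bar R) (theta : R -> 'rV[R]_n) (x : R -> 'rV[R]_n)
  : Prop :=
  [/\ {within [set t | gamma <= t /\ (t%:E < beta)%E], continuous x},
      (forall t, gamma <= t -> (t%:E < beta)%E -> D (x t)),
      right_deriv x t0 (f t0 (\matrix_(j < m, k < n) x (g j t0) 0 k)),
      (forall t, t0 < t -> (t%:E < beta)%E ->
          is_derive t 1 x (f t (\matrix_(j < m, k < n) x (g j t) 0 k)))
    & (forall t, gamma <= t <= t0 -> x t = theta t)].
Arguments powset {R} m {n} D _.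

(* Write w t = N (x t - x' t), C = sup_[gamma, t0] N (theta - theta') and
   K t = int_t0^t k.  As D is open, the Lipschitz bound forces k >= 0, so at
   every s the right derivative of w is at most k s times the maximum of w on
   the history [gamma, s].  For every eps > 0 the function
   phi t = C e^(K t) + eps e^(K t + t - t0) is nondecreasing, dominates C, and
   grows strictly faster than that inequality allows, so w cannot cross it: a
   real-induction argument on [t0, T] gives w <= phi, and eps -> 0 concludes. *)

From HB Require Import structures.
From mathcomp Require Import all_boot all_order all_algebra.
From mathcomp Require Import all_classical all_reals all_analysis.
From mathcomp Require Import ring lra.
Import Order.TTheory GRing.Theory Num.Theory.
Import numFieldNormedType.Exports.
Local Open Scope classical_set_scope.
Local Open Scope ring_scope.

Set Implicit Arguments.
Unset Strict Implicit.
Unset Printing Implicit Defensive.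

Section IsNorm.
Variables (R : realType) (n : nat) (N : 'rV[R]_n -> R).
Hypothesis normN : is_norm N.

Lemma is_norm0 : N 0 = 0.
Proof. by case: normN => _ NZ _; rewrite -(scale0r 0) NZ normr0 mul0r. Qed.

Lemma is_normN v : N (- v) = N v.
Proof. by case: normN => _ NZ _; rewrite -scaleN1r NZ normrN normr1 mul1r. Qed.

Lemma is_norm_ge0 v : 0 <= N v.
Proof.
case: normN => _ _ ND; have := ND v (- v).
by rewrite subrr is_norm0 is_normN -mulr2n pmulrn_lge0.
Qed.

Lemma is_norm_lerB u v : N u - N v <= N (u - v).
Proof. by case: normN => _ _ ND; rewrite lerBlDr -{1}(subrK v u) ND. Qed.

Lemma is_norm_sum (I : Type) (r : seq I) (F : I -> 'rV[R]_n) :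
  N (\sum_(i <- r) F i) <= \sum_(i <- r) N (F i).
Proof.
case: normN => _ _ ND; elim: r => [|a r IH]; first by rewrite !big_nil is_norm0.
by rewrite !big_cons (le_trans (ND _ _)) // lerD2l.
Qed.

Lemma is_norm_le_mx_norm : exists2 c, 0 <= c & forall v, N v <= c * `|v|.
Proof.
case: normN => _ NZ _; exists (\sum_(j < n) N (delta_mx 0 j)).
  by apply: sumr_ge0 => j _; exact: is_norm_ge0.
move=> v; rewrite {1}(row_sum_delta v).
apply: (le_trans (is_norm_sum _ _)); rewrite mulr_suml; apply: ler_sum => j _.
rewrite NZ mulrC ler_wpM2l ?is_norm_ge0 //.
rewrite [X in _ <= X](_ : _ = mx_norm v) // mx_normrE.
exact: (le_bigmax _ _ (0, j)).
Qed.

Lemma is_norm_le_small e :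
  0 < e -> exists2 r, 0 < r & forall v, `|v| < r -> N v <= e.
Proof.
have [c c0 Nc] := is_norm_le_mx_norm.
have c1_gt0 : 0 < c + 1 by rewrite ltr_wpDl.
move=> e0; exists (e / (c + 1)) => [|v ve]; first by rewrite divr_gt0.
apply: le_trans (Nc _) _.
apply: le_trans (_ : c * (e / (c + 1)) <= e); first by rewrite ler_wpM2l // ltW.
by rewrite mulrA ler_pdivrMr //; nra.
Qed.

Lemma is_norm_continuous : continuous N.
Proof.
move=> v; apply/(@cvgrPdist_le _ _ _ (nbhs v) (nbhs_filter v)) => e e0.
have [r r0 N_small] := is_norm_le_small e0.
apply/nbhs_ballP; exists r => // u; rewrite mx_norm_ball /= => vu.
rewrite ler_norml; apply/andP; split.
  rewrite lerNl opprB; apply: le_trans (is_norm_lerB _ _) _.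
  by rewrite -is_normN opprB N_small // distrC.
exact: le_trans (is_norm_lerB _ _) (N_small _ vu).
Qed.

Lemma is_norm_gt0 v : v != 0 -> 0 < N v.
Proof.
move=> v_neq0; rewrite lt_def is_norm_ge0 andbT.
by apply: contraNN v_neq0 => /eqP; case: normN => N_eq0 _ _ /N_eq0 ->.
Qed.

End IsNorm.

Lemma open_exists_neq (R : realType) (n : nat) (D : set 'rV[R]_n)
    (p : 'rV[R]_n) :
  (0 < n)%N -> open D -> D p -> exists2 q, D q & q != p.
Proof.
move=> n_gt0 oD Dp; pose e : 'rV[R]_n := const_mx 1.
have e_neq0 : e != 0.
  apply/eqP => /matrixP /(_ 0 (Ordinal n_gt0)); rewrite !mxE => /eqP.
  by rewrite oner_eq0.
have e_gt0 : 0 < `|e| by rewrite normr_gt0.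
have [r r0 ball_D] := (nbhs_normP _ _).1 (open_nbhs_nbhs (conj oD Dp)).
pose a := r / (2 * `|e|); have a_gt0 : 0 < a by rewrite divr_gt0 ?mulr_gt0.
exists (p + a *: e).
  apply: ball_D; rewrite /= opprD addrA subrr sub0r normrN normrZ gtr0_norm //.
  have -> : a * `|e| = r / 2 by rewrite /a; field; rewrite gt_eqF.
  by rewrite ltr_pdivrMr // ltr_pMr // ltr1n.
by rewrite -subr_eq0 addrC addKr scaler_eq0 negb_or gt_eqF.
Qed.

Lemma lipschitz_const_ge0 (R : realType) (n m : nat) (N : 'rV[R]_n -> R)
    (D : set 'rV[R]_n) (F : 'M[R]_(m, n) -> 'rV[R]_n) (c : R) :
  is_norm N -> (0 < n)%N -> (0 < m)%N -> open D -> D !=set0 ->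
  (forall z z', powset m D z -> powset m D z' ->
     N (F z - F z') <= c * normm N (z - z')) ->
  0 <= c.
Proof.
move=> normN n_gt0 m_gt0 oD [p Dp] F_lip.
have [q Dq q_neq_p] := open_exists_neq n_gt0 oD Dp.
pose rows (v : 'rV[R]_n) : 'M[R]_(m, n) := \matrix_(j < m) v.
have rowsK v j : row j (rows v) = v by rewrite rowK.
have rows_D v : D v -> powset m D (rows v) by move=> Dv j; rewrite rowsK.
have normm_gt0 : 0 < normm N (rows p - rows q).
  apply: lt_le_trans (le_bigmax _ _ (Ordinal m_gt0)).
  by rewrite linearB /= !rowsK is_norm_gt0 // subr_eq0 eq_sym.
have := F_lip _ _ (rows_D _ Dp) (rows_D _ Dq).
by move=> /(le_trans (is_norm_ge0 normN _)); rewrite pmulr_lge0.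
Qed.

Lemma is_derive_right_deriv (R : realType) (V : normedModType R) (x : R -> V)
    (s : R) (v : V) :
  is_derive s 1 x v -> right_deriv x s v.
Proof.
case=> dx <-; rewrite /right_deriv.
have -> : (fun h : R => h^-1 *: (x (h + s) - x s)) =
          (fun h : R => h^-1 *: ((x \o shift s) (h *: 1) - x s)).
  by apply/funext => h /=; rewrite /shift /= [h%:A]mulr1.
apply: cvg_trans dx; apply: cvg_app.
by apply: within_subset => // h /= /gt_eqF ->.
Qed.

Lemma right_derivB (R : realType) (V : normedModType R) (x y : R -> V)
    (s : R) (u v : V) :
  right_deriv x s u -> right_deriv y s v -> right_deriv (x \- y) s (u - v).
Proof.
move=> xu yv; rewrite /right_deriv.
have -> : (fun h : R => h^-1 *: ((x \- y) (h + s) - (x \- y) s)) =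
    (fun h => h^-1 *: (x (h + s) - x s) - h^-1 *: (y (h + s) - y s)).
  apply/funext => h /=; rewrite -scalerBr; congr (_ *: _).
  have subrACA (a b c d : V) : a - b - (c - d) = a - c - (b - d).
    by rewrite opprD addrACA -opprD.
  exact: subrACA.
exact: cvgB.
Qed.

Lemma right_deriv_norm_le (R : realType) (n : nat) (N : 'rV[R]_n -> R)
    (y : R -> 'rV[R]_n) (s : R) (v : 'rV[R]_n) :
  is_norm N -> right_deriv y s v ->
  forall e, 0 < e -> exists2 d, 0 < d &
    forall h, 0 < h < d -> N (y (s + h)) <= N (y s) + h * (N v + e).
Proof.
move=> normN yv e e0; have [r r0 N_small] := is_norm_le_small normN e0.
move: yv => /cvgrPdist_lt /(_ _ r0) /nbhs_normP [d d0 yv_d].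
exists d => // h /andP[h0 hd]; have [_ NZ ND] := normN.
have -> : y (s + h) = y s + h *: (v + (h^-1 *: (y (h + s) - y s) - v)).
  by rewrite subrKC scalerA mulfV ?gt_eqF // scale1r subrKC addrC.
apply: le_trans (ND _ _) _; rewrite lerD2l NZ gtr0_norm // ler_pM2l //.
apply: le_trans (ND _ _) _; rewrite lerD2l -is_normN // opprB N_small //.
by apply: yv_d => //; rewrite /= sub0r normrN gtr0_norm.
Qed.

Lemma continuous_le_left (R : realType) (w : R -> R) (a s c : R) :
  a < s -> {for s, continuous w} -> (forall v, a < v < s -> w v <= c) ->
  w s <= c.
Proof.
move=> a_s ws w_le; apply/ler_addgt0Pr => e e0.
have w_near : \forall v \near s, `|w s - w v| <= e.
  by move: ws => /(@cvgrPdist_le _ _ _ _ (nbhs_filter s)); apply.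
near s^'- => v.
apply: le_trans (_ : w v + e <= c + e); last first.
  rewrite lerD2r w_le //; apply/andP; split; near: v.
    exact: nbhs_left_gt.
  exact: nbhs_left_lt.
rewrite -lerBlDl; apply: le_trans (ler_norm _) _; near: v.
by move: w_near; apply: filterS => v + _.
Unshelve. all: by end_near.
Qed.

Lemma continuous_le_sup_itv (R : realType) (q : R -> R) (a b : R) :
  a <= b -> {within `[a, b], continuous q} ->
  forall u, a <= u <= b -> q u <= sup [set q s | s in `[a, b]].
Proof.
move=> ab qc u uI; have [c _ q_le_c] := EVT_max ab qc.
apply: ub_le_sup; last by exists u => //=; rewrite in_itv.
by exists (q c) => _ [s sI <-]; apply: q_le_c; rewrite inE.
Qed.

Lemma real_induction (R : realType) (a b : R) (P : R -> Prop) :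
  (forall s, a <= s <= b -> (forall u, a <= u < s -> P u) ->
     exists2 d, 0 < d & forall u, s <= u <= b -> u < s + d -> P u) ->
  forall t, a <= t <= b -> P t.
Proof.
move=> step t tI; apply: contrapT => nPt.
pose S := [set u | a <= u <= b /\ ~ P u].
have S_lb : lbound S a by move=> u [/andP[]].
have S_inf : has_inf S by split; [by exists t | by exists a].
have S_ge_inf : forall u, S u -> inf S <= u by exact: ge_inf S_inf.2.
have inf_I : a <= inf S <= b.
  rewrite lb_le_inf //=; last by exists t.
  by have /andP[_ tb] := tI; rewrite (le_trans (S_ge_inf t _) tb).
have below_inf : forall u, a <= u < inf S -> P u.
  move=> u /andP[au us]; apply: contrapT => nPu.
  suff : inf S <= u by rewrite leNgt us.
  apply: S_ge_inf; split => //.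
  by rewrite au (le_trans (ltW us)) //; case/andP: inf_I.
have [d d0 Pd] := step _ inf_I below_inf.
have [u Su ud] := inf_adherent d0 S_inf.
have [/andP[_ ub] nPu] := Su.
by apply: nPu; apply: Pd => //; rewrite ub S_ge_inf.
Qed.

Lemma ler_Rintegral_itvD (R : realType) (k : R -> R) (t0 a b lo : R) :
  {within `[t0, b], continuous k} -> t0 <= a -> a <= b ->
  (forall u, a <= u <= b -> lo <= k u) ->
  \int[lebesgue_measure]_(s in `[t0, a]) k s + lo * (b - a)
    <= \int[lebesgue_measure]_(s in `[t0, b]) k s.
Proof.
move=> kc t0a ab lo_k.
have kint : lebesgue_measure.-integrable `[t0, b] (EFin \o k).
  by apply: continuous_compact_integrable => //; exact: segment_compact.
have -> : [set` `[t0, b]] = [set` `[t0, a]] `|` [set` `]a, b]].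
  by apply: itv_bndbnd_setU; rewrite bnd_simp.
rewrite Rintegral_setU //; first last.
- apply/disj_setPS => u [] /=; rewrite !in_itv /= => /andP[_ ua] /andP[au _].
  by move: (le_lt_trans ua au); rewrite ltxx.
- by rewrite -itv_bndbnd_setU // bnd_simp.
rewrite lerD2l.
have kint_ab : lebesgue_measure.-integrable `]a, b] (EFin \o k).
  apply: integrableS kint => //.
  move=> u /=; rewrite !in_itv /= => /andP[au ->].
  by rewrite (le_trans t0a) ?ltW.
have cst_int : lebesgue_measure.-integrable `]a, b] (EFin \o (fun=> lo)).
  have cst_int_ab : lebesgue_measure.-integrable `[a, b] (EFin \o (fun=> lo)).
    apply: continuous_compact_integrable; first exact: segment_compact.
    by move=> ?; apply: cvg_cst.
  apply: integrableS cst_int_ab => //.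
  by move=> u /=; rewrite !in_itv /= => /andP[au ->]; rewrite ltW.
apply: le_trans (le_Rintegral _ cst_int kint_ab _) => //.
  rewrite Rintegral_cst // [X in fine X]lebesgue_measure_itv /= lte_fin.
  case: ltP => [//|ba]; suff -> : b = a by rewrite subrr mulr0.
  by apply/eqP; rewrite eq_le ab ba.
by move=> u /=; rewrite in_itv /= => /andP[au ub]; rewrite lo_k // ub ltW.
Qed.

Section Comparison.
Variables (R : realType) (t0 T : R) (k : R -> R).
Hypotheses (kc : {within `[t0, T], continuous k})
  (k_ge0 : forall u, t0 <= u <= T -> 0 <= k u).

Local Notation K u := (\int[lebesgue_measure]_(s in `[t0, u]) k s).

Lemma primitive_lower_bound a b lo : t0 <= a -> a <= b -> b <= T ->
  (forall u, a <= u <= b -> lo <= k u) -> K a + lo * (b - a) <= K b.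
Proof.
move=> t0a ab bT; apply: ler_Rintegral_itvD => //.
apply: continuous_subspaceW kc => u /=; rewrite !in_itv /= => /andP[-> ub].
exact: le_trans bT.
Qed.

Lemma primitive_ge0 u : t0 <= u <= T -> 0 <= K u.
Proof.
move=> /andP[t0u uT]; apply: Rintegral_ge0 => v /=; rewrite in_itv /=.
by move=> /andP[t0v vu]; rewrite k_ge0 // t0v (le_trans vu).
Qed.

Lemma primitive_le a b : t0 <= a -> a <= b -> b <= T -> K a <= K b.
Proof.
move=> t0a ab bT; rewrite -[K a]addr0 -(mul0r (b - a)).
apply: primitive_lower_bound => // u /andP[au ub].
by rewrite k_ge0 // (le_trans t0a au) (le_trans ub bT).
Qed.

Variables (C eps : R).
Hypotheses (C_ge0 : 0 <= C) (eps_gt0 : 0 < eps).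

Local Notation phi u := (C * expR (K u) + eps * expR (K u + u - t0)).

Lemma phi_le a b : t0 <= a -> a <= b -> b <= T -> phi a <= phi b.
Proof.
move=> t0a ab bT; have Kab : K a <= K b by exact: primitive_le.
rewrite lerD ?ler_wpM2l ?ler_expR ?(ltW eps_gt0) //.
by rewrite -!addrA lerD // lerD2r.
Qed.

Lemma le_phi u : t0 <= u <= T -> C <= phi u.
Proof.
move=> uI; rewrite -[leLHS]addr0; apply: lerD; last first.
  by rewrite mulr_ge0 ?expR_ge0 ?(ltW eps_gt0).
rewrite -[leLHS]mulr1 ler_wpM2l // -expR0 ler_expR; exact: primitive_ge0.
Qed.

Lemma phi_right_growth s : t0 <= s <= T ->
  exists2 e, 0 < e & exists2 d, 0 < d & forall h, 0 < h < d -> s + h <= T ->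
    phi s + h * (k s * phi s + e) <= phi (s + h).
Proof.
move=> /[dup] sI /andP[t0s sT].
pose B := eps * expR (K s + s - t0).
have B_gt0 : 0 < B by rewrite mulr_gt0 ?expR_gt0.
have phi_gt0 : 0 < phi s by rewrite ltr_wpDl ?mulr_ge0 ?expR_ge0.
pose delta := B / (2 * phi s).
have delta_gt0 : 0 < delta by rewrite divr_gt0 // mulr_gt0.
have k_near : \forall u \near s, t0 <= u <= T -> `|k s - k u| < delta.
  move/subspace_continuousP : kc => /(_ s); rewrite /= in_itv /= => /(_ sI).
  by move/cvgrPdist_lt => /(_ _ delta_gt0).
have [d d_gt0 k_ball] := (nbhs_normP _ _).1 k_near.
exists (B / 2); first by rewrite divr_gt0.
exists d => // h /andP[h_gt0 hd] shT.
pose D := K (s + h) - K s.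
have D_ge : (k s - delta) * h <= D.
  rewrite lerBrDl; have := @primitive_lower_bound s (s + h) (k s - delta).
  rewrite addrAC subrr add0r; apply => //; first by rewrite lerDl ltW.
  move=> u /andP[su ush]; rewrite lerBlDr -lerBlDl.
  apply: le_trans (ler_norm _) (ltW (k_ball u _ _)).
    rewrite /ball_ /= distrC ger0_norm ?subr_ge0 // ltrBlDl.
    by rewrite (le_lt_trans ush) // ltrD2l.
  by rewrite (le_trans t0s su) (le_trans ush shT).
have expR_grow (x y : R) : expR x * (1 + y) <= expR (x + y).
  by rewrite expRD ler_wpM2l ?expR_ge0 ?expR_ge1Dx.
have phi_sh : phi s + D * phi s + h * B <= phi (s + h).
  have -> : K (s + h) = K s + D by rewrite /D; ring.
  have -> : K s + D + (s + h) - t0 = (K s + s - t0) + (D + h) by ring.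
  apply: le_trans _ (lerD (ler_wpM2l C_ge0 (expR_grow _ D))
                        (ler_wpM2l (ltW eps_gt0) (expR_grow _ (D + h)))).
  by rewrite /B le_eqVlt; apply/orP; left; apply/eqP; ring.
apply: le_trans _ phi_sh.
have -> : phi s + h * (k s * phi s + B / 2) =
          phi s + (k s - delta) * h * phi s + h * B.
  by rewrite /delta; field; rewrite gt_eqF.
by rewrite lerD2r lerD2l ler_wpM2r // ltW.
Qed.

Lemma delay_comparison (gamma : R) (w : R -> R) :
  gamma <= t0 ->
  (forall u, gamma <= u <= t0 -> w u <= C) ->
  (forall s, t0 < s <= T -> {for s, continuous w}) ->
  (forall s P, t0 <= s <= T -> (forall u, gamma <= u <= s -> w u <= P) ->
     forall e, 0 < e -> exists2 d, 0 < d &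
       forall h, 0 < h < d -> w (s + h) <= w s + h * (k s * P + e)) ->
  forall t, t0 <= t <= T -> w t <= phi t.
Proof.
move=> gamma_t0 w_init w_cont w_growth.
apply: real_induction => s /[dup] sI /andP[t0s sT] w_le_phi.
have w_before : forall u, gamma <= u < s -> w u <= phi s.
  move=> u /andP[gu us]; have [ut0|t0u] := leP u t0.
    by apply: le_trans _ (le_phi sI); rewrite w_init ?gu.
  apply: le_trans _ (phi_le (ltW t0u) (ltW us) sT).
  by rewrite w_le_phi // ltW.
have w_hist : forall u, gamma <= u <= s -> w u <= phi s.
  move=> u /andP[gu]; rewrite le_eqVlt => /orP[/eqP -> | us]; last first.
    by rewrite w_before ?gu.
  have [st0|t0s'] := leP s t0.
    apply: le_trans _ (le_phi sI).
    by rewrite w_init ?st0 ?(le_trans gamma_t0 t0s).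
  apply: (continuous_le_left t0s'); first by apply: w_cont; rewrite t0s'.
  by move=> v /andP[t0v vs]; rewrite w_before // vs (le_trans gamma_t0) ?ltW.
have [e e_gt0 [d1 d1_gt0 phi_grow]] := phi_right_growth sI.
have [d2 d2_gt0 w_grow] := w_growth s (phi s) sI w_hist e e_gt0.
exists (Num.min d1 d2) => [|u /andP[su uT]]; first by rewrite lt_min d1_gt0.
rewrite -ltrBlDl lt_min => /andP[ud1 ud2].
have [<-|s_neq_u] := eqVneq s u.
  by rewrite w_hist // lexx (le_trans gamma_t0).
have us_gt0 : 0 < u - s by rewrite subr_gt0 lt_neqAle s_neq_u su.
rewrite -(subrKC s u); apply: le_trans (w_grow _ _) _; first by rewrite us_gt0.
apply: le_trans _ (phi_grow _ _ _); rewrite ?us_gt0 ?subrKC // lerD2r.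
by rewrite w_hist // lexx (le_trans gamma_t0).
Qed.

End Comparison.

Section DelaySolutions.
Variables (R : realType) (n m : nat) (N : 'rV[R]_n -> R) (D : set 'rV[R]_n)
  (f : R -> 'M[R]_(m, n) -> 'rV[R]_n) (k : R -> R) (g : 'I_m -> R -> R)
  (gamma t0 : R) (beta : \bar R).
Hypotheses (normN : is_norm N) (gamma_t0 : gamma <= t0)
  (f_lip : forall t z z', Jint t0 beta t -> powset m D z -> powset m D z' ->
     N (f t z - f t z') <= k t * normm N (z - z'))
  (k_ge0 : forall t, Jint t0 beta t -> 0 <= k t)
  (g_delay : forall j t, Jint t0 beta t -> gamma <= g j t <= t).

Local Notation delayed y t := (\matrix_(j < m, i < n) y (g j t) 0 i).

Lemma solution_right_deriv theta y : is_solution D f g gamma t0 beta theta y ->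
  forall s, Jint t0 beta s -> right_deriv y s (f s (delayed y s)).
Proof.
case=> _ _ y_t0 y_deriv _ s [t0s sb]; have [<-|t0_neq_s] := eqVneq t0 s => //.
by apply/is_derive_right_deriv/y_deriv; rewrite // lt_neqAle t0_neq_s.
Qed.

Lemma solution_continuous theta y : is_solution D f g gamma t0 beta theta y ->
  forall s, t0 < s -> (s%:E < beta)%E -> {for s, continuous y}.
Proof.
case=> _ _ _ y_deriv _ s t0s sb; have [y_derivable _] := y_deriv s t0s sb.
by apply: differentiable_continuous; apply/derivable1_diffP.
Qed.

Lemma delayed_in_powset theta y : is_solution D f g gamma t0 beta theta y ->
  forall s, Jint t0 beta s -> powset m D (delayed y s).
Proof.
case=> _ y_D _ _ _ s Js j; rewrite rowK.
have /andP[gamma_g g_s] := g_delay j Js; apply: y_D => //.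
by apply: le_lt_trans Js.2; rewrite lee_fin.
Qed.

Variables (theta theta' x x' : R -> 'rV[R]_n).
Hypotheses (x_sol : is_solution D f g gamma t0 beta theta x)
  (x'_sol : is_solution D f g gamma t0 beta theta' x').

Lemma dist_solutions_continuous s : t0 < s -> (s%:E < beta)%E ->
  {for s, continuous (fun u => N (x u - x' u))}.
Proof.
move=> t0s sb; apply: continuous_comp; last exact: is_norm_continuous.
exact: cvgB (solution_continuous x_sol t0s sb)
            (solution_continuous x'_sol t0s sb).
Qed.

Lemma dist_solutions_right_growth s P : Jint t0 beta s ->
  (forall u, gamma <= u <= s -> N (x u - x' u) <= P) ->
  forall e, 0 < e -> exists2 d, 0 < d & forall h, 0 < h < d ->
    N (x (s + h) - x' (s + h)) <= N (x s - x' s) + h * (k s * P + e).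
Proof.
move=> Js hist e e0.
have := right_derivB (solution_right_deriv x_sol Js)
                     (solution_right_deriv x'_sol Js).
move=> /(right_deriv_norm_le normN) /(_ e e0) [d d0 grow].
exists d => // h /[dup] hI /andP[h0 _]; apply: le_trans (grow h hI) _.
rewrite lerD2l ler_pM2l // lerD2r.
apply: le_trans (f_lip Js (delayed_in_powset x_sol Js)
                         (delayed_in_powset x'_sol Js)) _.
rewrite ler_wpM2l ?k_ge0 //; apply: bigmax_le => [|j _].
  apply: le_trans (hist s _); first exact: is_norm_ge0.
  by rewrite lexx andbT (le_trans gamma_t0 Js.1).
by rewrite linearB /= !rowK hist // g_delay.
Qed.

Lemma initial_dist_le_sup :
  {within `[gamma, t0], continuous theta} ->
  {within `[gamma, t0], continuous theta'} ->
  forall u, gamma <= u <= t0 ->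
    N (x u - x' u) <= sup [set N (theta s - theta' s) | s in `[gamma, t0]].
Proof.
move=> thc thc' u uI; case: x_sol => _ _ _ _ ->//; case: x'_sol => _ _ _ _ ->//.
apply: continuous_le_sup_itv => // s; apply: continuous_comp.
  exact: cvgB (thc s) (thc' s).
exact: is_norm_continuous.
Qed.

Lemma dist_solutions_le T C eps :
  {within Jint t0 beta, continuous k} -> Jint t0 beta T -> 0 <= C -> 0 < eps ->
  (forall u, gamma <= u <= t0 -> N (x u - x' u) <= C) ->
  N (x T - x' T) <=
    C * expR (\int[lebesgue_measure]_(s in `[t0, T]) k s)
    + eps * expR (\int[lebesgue_measure]_(s in `[t0, T]) k s + T - t0).
Proof.
move=> kc [t0T Tb] C_ge0 eps_gt0 w_init.
have JT u : t0 <= u <= T -> Jint t0 beta u.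
  by move=> /andP[t0u uT]; split => //; apply: le_lt_trans Tb; rewrite lee_fin.
have kT : {within `[t0, T], continuous k}.
  by apply: continuous_subspaceW kc => u /=; rewrite in_itv /= => /JT.
apply: (delay_comparison kT _ C_ge0 eps_gt0 gamma_t0 w_init); last first.
- by rewrite t0T lexx.
- by move=> s P sI; exact: dist_solutions_right_growth (JT s sI).
- move=> s /andP[t0s sT]; have [_ sb] : Jint t0 beta s.
    by apply: JT; rewrite (ltW t0s) sT.
  exact (dist_solutions_continuous t0s sb).
- by move=> u /JT; exact: k_ge0.
Qed.

End DelaySolutions.

Unset Implicit Arguments.
Theorem mainTheorem2 (R : realType) (n m : nat) (N : 'rV[R]_n -> R)
  (t0 : R) (beta : \bar R) (D : set 'rV[R]_n)
  (f : R -> 'M[R]_(m, n) -> 'rV[R]_n) (k : R -> R) (g : 'I_m -> R -> R)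
  (gamma : R) (theta theta' x x' : R -> 'rV[R]_n) :
  is_norm N ->
  (t0%:E < beta)%E ->
  open D ->
  (1 <= m)%N ->
  {within [set p : R * 'M[R]_(m, n) | Jint t0 beta p.1 /\ powset m D p.2],
     continuous (fun p => f p.1 p.2)} ->
  {within Jint t0 beta, continuous k} ->
  (forall t z z', Jint t0 beta t -> powset m D z -> powset m D z' ->
     N (f t z - f t z') <= k t * normm N (z - z')) ->
  (forall j, {within Jint t0 beta, continuous (g j)}) ->
  gamma <= t0 ->
  (forall j t, Jint t0 beta t -> gamma <= g j t <= t) ->
  {within `[gamma, t0], continuous theta} ->
  {within `[gamma, t0], continuous theta'} ->
  (forall s, gamma <= s <= t0 -> D (theta s)) ->
  (forall s, gamma <= s <= t0 -> D (theta' s)) ->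
  is_solution D f g gamma t0 beta theta x ->
  is_solution D f g gamma t0 beta theta' x' ->
  forall t, Jint t0 beta t ->
    N (x t - x' t) <=
      sup [set N (theta s - theta' s) | s in `[gamma, t0]] *
      expR (\int[lebesgue_measure]_(s in `[t0, t]) k s).
Proof.
(* Continuity of f and of the delays, theta' taking values in D and
   t0 < beta are not needed for the estimate. *)
move=> normN _ oD m_gt0 _ kc f_lip _ gamma_t0 g_delay thc thc' thD _
  x_sol x'_sol T JT.
have w_init := initial_dist_le_sup normN gamma_t0 x_sol x'_sol thc thc'.
have C_ge0 : 0 <= sup [set N (theta s - theta' s) | s in `[gamma, t0]].
  by apply: le_trans (w_init t0 _); rewrite ?is_norm_ge0 ?gamma_t0 ?lexx.
have [n0|n_gt0] := posnP n.
  by subst n; rewrite (thinmx0 (x T - x' T)) is_norm0 // mulr_ge0 ?expR_ge0.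
have k_ge0 t : Jint t0 beta t -> 0 <= k t.
  move=> Jt; apply: (lipschitz_const_ge0 normN n_gt0 m_gt0 oD).
    by exists (theta t0); apply: thD; rewrite gamma_t0 lexx.
  by move=> z z'; exact: f_lip.
apply/ler_addgt0Pr => e e_gt0.
pose E := expR (\int[lebesgue_measure]_(s in `[t0, T]) k s + T - t0).
have E_gt0 : 0 < E by exact: expR_gt0.
have := dist_solutions_le normN gamma_t0 f_lip k_ge0 g_delay x_sol x'_sol kc JT
  C_ge0 (divr_gt0 e_gt0 E_gt0) w_init.
by rewrite -/E divfK ?gt_eqF.
Qed.
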